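(* The abelian groups in $\mathcal{D}_1$ are exactly the cyclic groups of order $p^2$ with $p$ prime. The nonabelian groups in $\mathcal{D}_1$ are exactly the Frobenius groups of order $pq$ with $p,q$ primes.
   Context: All groups are finite. $\mathcal{D}(G)$ denotes the number of conjugacy classes of nontrivial subgroups $H$ of $G$ with $N_G(H)\neq H$; $\mathcal{D}_n$ is the family of finite groups $G$ with $\mathcal{D}(G)=n$. *)

From mathcomp Require Import all_boot all_fingroup all_solvable.
Set Implicit Arguments. Unset Strict Implicit. Unset Printing Implicit Defensive.
Local Open Scope group_scope.

Definition nonselfnorm_subgroups (gT : finGroupType) (G : {set gT}) : {set {set gT}} :=
  [set H : {set gT} | [&& group_set H, H \subset G, H != 1 & 'N_G(H) != H]].

Definition calD (gT : finGroupType) (G : {set gT}) : nat :=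
  #| [set H :^: G | H in nonselfnorm_subgroups G] |.

From mathcomp Require Import all_boot all_fingroup all_solvable.
From mathcomp Require vcharacter.
Set Implicit Arguments. Unset Strict Implicit. Unset Printing Implicit Defensive.
Local Open Scope group_scope.

(* If calD G = 1 then all non-self-normalizing subgroups are conjugate, hence of
   equal order.  In an abelian group they are the proper nontrivial subgroups,
   and a unique such subgroup forces G = <x> cyclic with <x^p> = <y> for y of
   prime order p, i.e. |G| = p^2.  In a p-group every proper subgroup is
   non-self-normalizing, so p-groups with calD = 1 have order at most p^2 and
   are abelian.  Hence a nonabelian G with calD G = 1 has an element y of prime
   order with <y> self-normalizing, and <y> is then a Frobenius complement; the
   Frattini argument makes the Sylow subgroups of the kernel K
   non-self-normalizing, so K is a p-group all of whose nontrivial subgroups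
   have order |K|, i.e. |K| = p.  Conversely, in a Frobenius group of order pq
   the complements are self-normalizing Sylow subgroups, leaving the kernel as
   the only non-self-normalizing subgroup. *)

Lemma dvdn_mul_prime_eq p q d :
  0 < p -> prime q -> p %| d -> d %| p * q -> d < p * q -> d = p.
Proof.
move=> p_gt0 pr_q /dvdnP[e ->]; rewrite [(e * p)%N]mulnC dvdn_pmul2l // ltn_pmul2l //.
case/primeP: pr_q => _ /[apply] /orP[] /eqP-> //; first by rewrite muln1.
by rewrite ltnn.
Qed.

Lemma dvdn_mul_primes p q d :
  prime p -> prime q -> d %| p * q -> 1 < d < p * q -> (d == p) || (d == q).
Proof.
move=> pr_p pr_q dv_d /andP[d_gt1 lt_d].
have: pdiv d %| p * q by rewrite (dvdn_trans (pdiv_dvd d)).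
rewrite Euclid_dvdM ?pdiv_prime // !dvdn_prime2 ?pdiv_prime // => /orP[]/eqP pd.
  by rewrite (@dvdn_mul_prime_eq p q d) ?eqxx ?prime_gt0 // -pd pdiv_dvd.
rewrite mulnC in dv_d lt_d.
by rewrite (@dvdn_mul_prime_eq q p d) ?eqxx ?orbT ?prime_gt0 // -pd pdiv_dvd.
Qed.

Section NonSelfNormalizing.

Variable gT : finGroupType.
Implicit Types G H K P : {group gT}.

Definition nonselfnorm G H := [&& H \subset G, H :!=: 1 & 'N_G(H) :!=: H].

Lemma mem_nonselfnorm_subgroups G H :
  (gval H \in nonselfnorm_subgroups G) = nonselfnorm G H.
Proof. by rewrite inE groupP. Qed.

Lemma nonselfnorm_subgroupsP G (X : {set gT}) :
  X \in nonselfnorm_subgroups G -> exists2 K : {group gT}, X = K & nonselfnorm G K.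
Proof.
move=> nsX; have := nsX; rewrite inE => /andP[gX _].
by exists (Group gX); rewrite // -mem_nonselfnorm_subgroups.
Qed.

Lemma calD_eq1P G :
  calD G = 1%N <->
  exists2 H, nonselfnorm G H & forall K, nonselfnorm G K -> gval K \in H :^: G.
Proof.
rewrite /calD; split=> [/eqP/cards1P[C defC] | [H nsH classH]].
  have: C \in [set X :^: G | X in nonselfnorm_subgroups G] by rewrite defC set11.
  case/imsetP=> _ /nonselfnorm_subgroupsP[H -> nsH] defCH.
  exists H => // K nsK; rewrite -defCH.
  have: K :^: G \in [set X :^: G | X in nonselfnorm_subgroups G].
    by apply: imset_f; rewrite mem_nonselfnorm_subgroups.
  by rewrite defC inE => /eqP <-; rewrite -orbitJs orbit_refl.
apply/eqP/cards1P; exists (H :^: G); apply/setP=> C; rewrite inE.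
apply/imsetP/eqP=> [[_ /nonselfnorm_subgroupsP[K -> nsK] ->] | ->].
  by rewrite -!orbitJs; apply/orbit_eqP; rewrite orbitJs classH.
by exists (gval H); rewrite ?mem_nonselfnorm_subgroups.
Qed.

Lemma calD1_card G H K :
  calD G = 1%N -> nonselfnorm G H -> nonselfnorm G K -> #|K| = #|H|.
Proof.
case/calD_eq1P=> H0 _ classH0 /classH0/imsetP[x _ ->] /classH0/imsetP[y _ ->].
by rewrite !cardJg.
Qed.

Lemma nonselfnorm_normal G H :
  H <| G -> H \proper G -> H :!=: 1 -> nonselfnorm G H.
Proof.
move=> nsHG ltHG ntH; rewrite /nonselfnorm proper_sub // ntH.
by rewrite (setIidPl (normal_norm nsHG)); apply: contraTneq ltHG => ->; rewrite properxx.
Qed.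

Lemma nonselfnorm_nil G P H :
  nilpotent P -> P \subset G -> H \proper P -> H :!=: 1 -> nonselfnorm G H.
Proof.
move=> nilP sPG ltHP ntH; rewrite /nonselfnorm ntH (subset_trans (proper_sub ltHP) sPG).
have := nilpotent_proper_norm nilP ltHP.
apply: contraTneq => NH; have sNH : 'N_P(H) \subset H by rewrite -{2}NH setSI.
by rewrite properE sNH andbF.
Qed.

Lemma calD1_pgroup_card (p : nat) G P :
  calD G = 1%N -> p.-group P -> nonselfnorm G P -> #|P| = p.
Proof.
move=> D1 pP nsP; have /and3P[sPG ntP _] := nsP.
have [pr_p p_dv _] := pgroup_pdiv pP ntP.
have [y Py oy] := Cauchy pr_p p_dv.
rewrite -oy orderE; have sYP : <[y]> \subset P by rewrite cycle_subG.
have [-> // | neYP] := eqVneq <[y]> (P : {set gT}).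
symmetry; apply: calD1_card D1 nsP _; apply: nonselfnorm_nil (pgroup_nil pP) sPG _ _.
  by rewrite properEneq neYP.
by rewrite -cardG_gt1 -orderE oy prime_gt1.
Qed.

Lemma calD1_pgroup_abelian (p : nat) G : calD G = 1%N -> p.-group G -> abelian G.
Proof.
move=> D1 pG; have [-> | ntG] := eqsVneq G 1; first exact: abelian1.
have [pr_p _ _] := pgroup_pdiv pG ntG; have p_gt1 := prime_gt1 pr_p.
rewrite (p2group_abelian pG) // leqNgt; apply/negP=> lt2G.
have [A [sAG _ cardA]] := normal_pgroup pG (normal_refl G) (ltnW lt2G).
have ltAG : A \proper G by rewrite properEcard sAG cardA (card_pgroup pG) ltn_exp2l.
have ntA : A :!=: 1 by rewrite -cardG_gt1 cardA (ltn_exp2l 0).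
have nsA := nonselfnorm_nil (pgroup_nil pG) (subxx G) ltAG ntA.
have := calD1_pgroup_card D1 (pgroupS sAG pG) nsA.
by rewrite cardA => /eqP; rewrite -{2}[p]expn1 eqn_exp2l.
Qed.

End NonSelfNormalizing.

Section Abelian.

Variable gT : finGroupType.
Implicit Types G H K : {group gT}.

Lemma proper_nontrivial_card G K :
  K \subset G -> 1 < #|K| < #|G| -> (K \proper G) && (K :!=: 1).
Proof. by move=> sKG /andP[K_gt1 ltKG]; rewrite properEcard sKG ltKG -cardG_gt1. Qed.

Lemma nonselfnorm_abelian G H :
  abelian G -> nonselfnorm G H = (H \proper G) && (H :!=: 1).
Proof.
move=> abG; rewrite /nonselfnorm properEneq.
have [sHG | _] := boolP (H \subset G); last by rewrite andbF.
by rewrite (setIidPl (sub_abelian_norm abG sHG)) /= !andbT andbC eq_sym.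
Qed.

Lemma calD1_abelianP G :
  abelian G ->
  calD G = 1%N <->
  exists2 H : {group gT}, (H \proper G) && (H :!=: 1) &
             forall K, K \proper G -> K :!=: 1 -> K :=: H.
Proof.
move=> abG; apply: iff_trans (calD_eq1P G) _.
split=> -[H nsH uniqH]; exists H.
- by rewrite -nonselfnorm_abelian.
- move=> K ltKG ntK; have /imsetP[x Gx ->] : gval K \in H :^: G.
    by apply: uniqH; rewrite nonselfnorm_abelian ?ltKG.
  have /and3P[sHG _ _] := nsH.
  exact/normP/(subsetP (sub_abelian_norm abG sHG)).
- by rewrite nonselfnorm_abelian.
- move=> K; rewrite nonselfnorm_abelian // => /andP[ltKG ntK].
  by rewrite (uniqH K) // -orbitJs orbit_refl.
Qed.

Lemma unique_proper_subgroup_cyclic G H :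
  H \proper G -> (forall K, K \proper G -> K :!=: 1 -> K :=: H) -> cyclic G.
Proof.
case/properP=> _ [x Gx notHx] uniqH; apply/cyclicP; exists x; apply/eqP.
have ntx : x != 1 by apply: contraNneq notHx => ->; apply: group1.
rewrite eq_sym eqEproper cycle_subG Gx; apply: contra notHx => ltXG.
by rewrite -(uniqH <[x]>%G) ?cycle_id ?cycle_eq1.
Qed.

Lemma unique_proper_subgroup_card G H :
  H \proper G -> H :!=: 1 -> (forall K, K \proper G -> K :!=: 1 -> K :=: H) ->
  exists p, prime p /\ #|G| = (p ^ 2)%N.
Proof.
move=> ltHG ntH uniqH; have /cyclicP[x defG] := unique_proper_subgroup_cyclic ltHG uniqH.
have H_gt1 : 1 < #|H| by rewrite cardG_gt1.
have ltHn := proper_card ltHG; have dvHn := cardSg (proper_sub ltHG).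
set n := #|G| in ltHn dvHn *; have n_gt1 := ltn_trans H_gt1 ltHn.
have pr_p := pdiv_prime n_gt1; have p_dv := pdiv_dvd n; set p := pdiv n in pr_p p_dv.
have ltpn : p < n.
  rewrite ltn_neqAle dvdn_leq ?(ltnW n_gt1) // andbT; apply/eqP=> pn.
  rewrite -pn in dvHn ltHn; case/primeP: pr_p => _ /(_ _ dvHn) /orP[] /eqP eqH.
    by rewrite eqH in H_gt1.
  by rewrite eqH ltnn in ltHn.
have [y Gy oy] := Cauchy pr_p p_dv.
have cardHp : #|H| = p.
  have /andP[ltYG ntY] : (<[y]> \proper G) && (<[y]> :!=: 1).
    by rewrite proper_nontrivial_card ?cycle_subG // -orderE oy prime_gt1.
  by rewrite -oy orderE -(uniqH <[y]>%G).
have cardHnp : #|H| = (n %/ p)%N.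
  have ox : #[x] = n by rewrite orderE -defG.
  have Gx : x \in G by rewrite defG cycle_id.
  have /andP[ltZG ntZ] : (<[x ^+ p]> \proper G) && (<[x ^+ p]> :!=: 1).
    rewrite proper_nontrivial_card ?cycle_subG ?groupX -?orderE ?orderXdiv ?ox //.
    by rewrite -/n ltn_divRL // mul1n ltpn ltn_Pdiv ?prime_gt1 ?(ltnW n_gt1).
  by rewrite -ox -orderXdiv ?ox // orderE -(uniqH <[x ^+ p]>%G).
by exists p; rewrite -(divnK p_dv) -cardHnp cardHp mulnn.
Qed.

Lemma p2group_proper_card (p : nat) G K :
  prime p -> #|G| = (p ^ 2)%N -> K \proper G -> K :!=: 1 -> #|K| = p.
Proof.
move=> pr_p cardG ltKG ntK; have := cardSg (proper_sub ltKG).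
rewrite cardG => /(dvdn_pfactor _ _ pr_p)[[|[|[|//]]] _] cardK.
- by rewrite -cardG_gt1 cardK in ntK.
- by rewrite cardK expn1.
- by have := proper_card ltKG; rewrite cardK cardG ltnn.
Qed.

Lemma abelian_calD1 G :
  abelian G -> calD G = 1%N <-> cyclic G /\ exists p, prime p /\ #|G| = (p ^ 2)%N.
Proof.
move=> abG; apply: iff_trans (calD1_abelianP abG) _.
split=> [[H /andP[ltHG ntH] uniqH] | [cycG [p [pr_p cardG]]]].
  split; first exact: unique_proper_subgroup_cyclic uniqH.
  exact: unique_proper_subgroup_card ntH uniqH.
have [y Gy oy] : {y | y \in G & #[y] = p}.
  by apply: Cauchy pr_p _; rewrite cardG dvdn_exp.
have p_gt1 := prime_gt1 pr_p.
have ltY : (<[y]> \proper G) && (<[y]> :!=: 1).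
  rewrite proper_nontrivial_card ?cycle_subG // -orderE oy p_gt1 cardG.
  by rewrite -{1}[p]expn1 ltn_exp2l.
exists <[y]>%G => // K ltKG ntK; have /andP[ltYG _] := ltY.
apply/eqP; rewrite (eq_subG_cyclic cycG) ?proper_sub //.
by rewrite !(p2group_proper_card pr_p cardG) // -cardG_gt1 -orderE oy.
Qed.

End Abelian.

Section Frobenius.

Variable gT : finGroupType.
Implicit Types G H K L Q : {group gT}.

Lemma Frobenius_compl_selfnorm G H : [Frobenius G with complement H] -> 'N_G(H) = H.
Proof. by case/andP=> _ /and3P[_ _ /eqP]; rewrite normD1. Qed.

Lemma prime_selfnorm_Frobenius G Q :
  prime #|Q| -> Q \proper G -> 'N_G(Q) = Q -> [Frobenius G with complement Q].
Proof.
move=> prQ; rewrite properEneq => /andP[neQG sQG] NQ; apply/andP; split=> //.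
apply/normedTI_memJ_P; split=> //; first by rewrite setD_eq0 subG1 -cardG_gt1 prime_gt1.
move=> a g /setD1P[ntA Qa] Gg; apply/idP/idP=> [/setD1P[ntAg Qag] | Qg]; last first.
  by rewrite !inE conjg_eq1 ntA groupJ.
have: Q :&: Q :^ g != 1 by apply/trivgPn; exists (a ^ g); rewrite // inE Qag memJ_conjg.
move/(prime_meetG prQ) => sQQg.
have QgQ : Q :^ g = Q by apply/esym/eqP; rewrite eqEcard sQQg cardJg leqnn.
by rewrite -NQ inE Gg; apply/normP.
Qed.

Lemma eq_card_pHall pi G H L :
  pi.-Hall(G) H -> L \subset G -> #|L| = #|H| -> pi.-Hall(G) L.
Proof. by move=> hallH sLG cardL; rewrite pHallE sLG cardL (card_Hall hallH) /=. Qed.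

Lemma normal_Hall_card_uniq G K L :
  Hall G K -> K <| G -> L \subset G -> #|L| = #|K| -> L :=: K.
Proof.
move=> /Hall_pi hallK nsKG sLG cardL; apply/eqP.
rewrite eqEcard cardL leqnn andbT (sub_normal_Hall hallK nsKG sLG).
exact: pHall_pgroup (eq_card_pHall hallK sLG cardL).
Qed.

Lemma Frobenius_prime_compl_selfnorm G K H L :
  [Frobenius G = K ><| H] -> prime #|H| -> L \subset G -> #|L| = #|H| ->
  'N_G(L) = L.
Proof.
move=> frobG prH sLG cardL.
have sylH : #|H|.-Sylow(G) H.
  by rewrite -(eq_pHall _ _ (pi_of_prime prH)) Hall_pi ?(Frobenius_compl_Hall frobG).
have [x Gx ->] := Sylow_trans sylH (eq_card_pHall sylH sLG cardL).
rewrite normJ -{1}(conjGid Gx) -conjIg.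
by rewrite Frobenius_compl_selfnorm ?(FrobeniusWcompl frobG).
Qed.

Lemma Frobenius_pq_calD1 G :
  [Frobenius G] -> (exists p q, [/\ prime p, prime q & #|G| = (p * q)%N]) ->
  calD G = 1%N.
Proof.
case/existsP=> H frobH [p [q [pr_p pr_q cardG]]].
have [K frobG] := vcharacter.Frobenius_kernel_exists frobH.
have [defG ntK ntH ltKG ltHG] := Frobenius_context frobG.
have [nsKG _ _ _ _] := sdprod_context defG.
have cardKH := sdprod_card defG.
have proper_card_prime L : L \proper G -> L :!=: 1 -> prime #|L|.
  move=> ltLG ntL; have := @dvdn_mul_primes p q #|L| pr_p pr_q.
  rewrite -cardG cardSg ?proper_sub // cardG_gt1 ntL proper_card //.
  by case/(_ isT isT)/orP=> /eqP->.
apply/calD_eq1P; exists K; first exact: nonselfnorm_normal.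
move=> L /and3P[sLG ntL nNL].
have ltLG : L \proper G.
  rewrite properEneq sLG andbT.
  by apply: contraNneq nNL => ->; rewrite (setIidPl (normG G)).
have := @dvdn_mul_primes #|K| #|H| #|L| (proper_card_prime K ltKG ntK).
rewrite (proper_card_prime H ltHG ntH) cardKH cardSg // cardG_gt1 ntL proper_card //.
case/(_ isT isT isT)/orP=> /eqP cardL.
  have -> := normal_Hall_card_uniq (Frobenius_ker_Hall frobG) nsKG sLG cardL.
  by rewrite -orbitJs orbit_refl.
have prH := proper_card_prime H ltHG ntH.
by rewrite (Frobenius_prime_compl_selfnorm frobG prH sLG cardL) eqxx in nNL.
Qed.

Lemma calD1_Frobenius_ker_prime G K H :
  calD G = 1%N -> [Frobenius G = K ><| H] -> prime #|K|.
Proof.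
move=> D1 frobG; have [defG ntK _ ltKG _] := Frobenius_context frobG.
have [nsKG _ _ _ _] := sdprod_context defG.
have K_gt1 : 1 < #|K| by rewrite cardG_gt1.
have [P sylP] := Sylow_exists (pdiv #|K|) K; have sPK := pHall_sub sylP.
have nsP : nonselfnorm G P.
  rewrite /nonselfnorm (subset_trans sPK (proper_sub ltKG)) -cardG_gt1.
  rewrite (card_Hall sylP) p_part_gt1 mem_primes pdiv_prime ?cardG_gt0 ?pdiv_dvd //=.
  apply/eqP=> NP; have := Frattini_arg nsKG sylP; rewrite NP mulGSid // => defK.
  by rewrite defK properxx in ltKG.
have defP : P :=: K.
  apply/eqP; rewrite eqEcard sPK (calD1_card D1 (nonselfnorm_normal nsKG ltKG ntK) nsP).
  by rewrite leqnn.
by rewrite -defP (calD1_pgroup_card D1 (pHall_pgroup sylP) nsP) pdiv_prime.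
Qed.

Lemma calD1_selfnorm_prime_cycle G :
  calD G = 1%N -> ~~ abelian G ->
  exists2 y, y \in G & prime #[y] && ('N_G(<[y]>) == <[y]>).
Proof.
move=> D1 nabG; have [H0 nsH0 _] := (calD_eq1P G).1 D1.
apply/exists_inP; apply: contraNT nabG => noY.
apply: (calD1_pgroup_abelian (p := #|H0|) D1); apply/pgroupP=> r pr_r r_dv.
have [y Gy oy] := Cauchy pr_r r_dv.
have nsY : nonselfnorm G <[y]>.
  rewrite /nonselfnorm cycle_subG Gy -cardG_gt1 -orderE oy prime_gt1 //=.
  by apply: contraNneq noY => Ny; apply/exists_inP; exists y; rewrite // oy pr_r Ny eqxx.
by rewrite inE /= -oy orderE (calD1_card D1 nsH0 nsY).
Qed.

Lemma calD1_Frobenius_pq G :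
  ~~ abelian G -> calD G = 1%N ->
  [Frobenius G] /\ exists p q, [/\ prime p, prime q & #|G| = (p * q)%N].
Proof.
move=> nabG D1; have [y Gy /andP[pr_y /eqP Ny]] := calD1_selfnorm_prime_cycle D1 nabG.
have ltYG : <[y]> \proper G.
  rewrite properEneq cycle_subG Gy andbT.
  by apply: contraNneq nabG => <-; apply: cycle_abelian.
have prY : prime #|<[y]>| by rewrite -orderE.
have frobY := prime_selfnorm_Frobenius prY ltYG Ny.
have [K frobG] := vcharacter.Frobenius_kernel_exists frobY.
split; first exact: FrobeniusW frobG.
exists #|K|, #[y]; split=> //; first exact: calD1_Frobenius_ker_prime D1 frobG.
by have [defG _ _ _ _] := Frobenius_context frobG; rewrite orderE (sdprod_card defG).
Qed.

End Frobenius.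

Theorem mainTheorem4 (gT : finGroupType) (G : {group gT}) :
  (abelian G ->
     (calD G = 1%N <-> cyclic G /\ exists p, prime p /\ #|G| = (p ^ 2)%N)) /\
  (~~ abelian G ->
     (calD G = 1%N <-> [Frobenius G] /\
        exists p q, [/\ prime p, prime q & #|G| = (p * q)%N])).
Proof.
split=> [/abelian_calD1 // | nabG]; split; first exact: calD1_Frobenius_pq.
by case; apply: Frobenius_pq_calD1.
Qed.
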